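(* Let $\mathbf{a}$ be a CSCA and $\xi\in\mathcal{P}^2$ a non-zero vector with $\mathbf{a}\xi=\xi$. Then $\mathbf{a}$ is periodic with period two, i.e. $\mathbf{a}^2=\mathbb{1}$ (equivalently $\mathrm{tr}\,\mathbf{a}=0$).
   Context: $\mathcal{P}$ is the ring of Laurent polynomials in $u$ over $\mathbb{Z}_2$, $\mathcal{R}$ its subring of palindromes ($p(u^{-1})=p(u)$). A CSCA is a $2\times2$ matrix with entries in $\mathcal{R}$ and determinant $1$, acting on $\mathcal{P}^2$. *)

(* The ring P = Z_2[u, u^-1] of Laurent polynomials is realised inside the
   field K = Z_2(u) of rational functions ({fraction {poly 'F_2}}) as the
   elements of the form p(u) / u^n, with p a polynomial and n a natural. *)
From HB Require Import structures.
From mathcomp Require Import all_boot all_order all_algebra fraction.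
Set Implicit Arguments. Unset Strict Implicit. Unset Printing Implicit Defensive.
Import Order.TTheory GRing.Theory.
Local Open Scope ring_scope.

Notation tofrac := (@FracField.tofrac {poly 'F_2}).
Definition K := {fraction {poly 'F_2}}.

Definition uK : K := (tofrac ('X : {poly 'F_2})).

Definition polyK (p : {poly 'F_2}) : K := (tofrac p).

Definition evalK (p : {poly 'F_2}) (t : K) : K :=
  (map_poly (fun c : 'F_2 => tofrac (c%:P : {poly 'F_2})) p).[t].

Definition laurent (x : K) : Prop :=
  exists (p : {poly 'F_2}) (n : nat), x = polyK p / uK ^+ n.

(* x is a palindrome (x in R): x(u^{-1}) = x(u); for x = p(u)/u^n we have
   x(u^{-1}) = p(u^{-1}) / (u^{-1})^n. *)
Definition palindromic (x : K) : Prop :=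
  exists (p : {poly 'F_2}) (n : nat),
    x = polyK p / uK ^+ n /\ evalK p uK^-1 / uK^-1 ^+ n = x.

Definition CSCA (a : 'M[K]_2) : Prop :=
  (forall i j, palindromic (a i j)) /\ \det a = 1.

Definition laurent_vec (xi : 'cV[K]_2) : Prop := forall i, laurent (xi i 0).

(* Only the field structure of K is needed: a fixed vector makes 1 an eigenvalue
   of [a], and [det a = 1] forces the other eigenvalue to be 1 too, so
   [tr a = 2 = 0] in characteristic 2; Cayley-Hamilton then gives
   [a^2 = tr a * a - det a = -1 = 1]. *)
From mathcomp Require Import all_boot all_algebra fraction ring.
Set Implicit Arguments.
Unset Strict Implicit.
Unset Printing Implicit Defensive.

Local Open Scope ring_scope.
Import GRing.Theory.

Lemma mx2P (T : Type) (A B : 'M[T]_2) :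
  A 0 0 = B 0 0 -> A 0 1 = B 0 1 -> A 1 0 = B 1 0 -> A 1 1 = B 1 1 -> A = B.
Proof.
move=> e00 e01 e10 e11; apply/matrixP => i j.
have ord2 (k : 'I_2) : k = 0 \/ k = 1.
  by case: k => [[|[|//]] ?]; [left | right]; apply: val_inj.
by case: (ord2 i) => ->; case: (ord2 j) => ->.
Qed.

Section Matrix2.

Variable R : comNzRingType.
Implicit Type A : 'M[R]_2.

Lemma sum_ord2 (F : 'I_2 -> R) : \sum_(i < 2) F i = F 0 + F 1.
Proof. by rewrite !big_ord_recl big_ord0 addr0; congr (F _ + F _); apply: val_inj. Qed.

Lemma det_mx2 A : \det A = A 0 0 * A 1 1 - A 0 1 * A 1 0.
Proof.
have lift00 : lift 0 (0 : 'I_1) = 1 :> 'I_2 by apply: val_inj.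
have lift10 : lift 1 (0 : 'I_1) = 0 :> 'I_2 by apply: val_inj.
rewrite (expand_det_row _ 0) sum_ord2 /cofactor !det_mx11 !mxE /= lift00 lift10.
by rewrite expr0 expr1 !mul1r mulN1r mulrN.
Qed.

Lemma mxtrace_mx2 A : \tr A = A 0 0 + A 1 1.
Proof. exact: sum_ord2. Qed.

Lemma Cayley_Hamilton_mx2 A : A *m A = \tr A *: A - (\det A)%:M.
Proof.
by apply: mx2P; rewrite !mxE !sum_ord2 det_mx2 mxtrace_mx2 /=; ring.
Qed.

Lemma det_mx2_subr1 A : \det (A - 1%:M) = \det A - \tr A + 1.
Proof. by rewrite !det_mx2 mxtrace_mx2 !mxE /=; ring. Qed.

End Matrix2.

Lemma det_subr1_fixed_eq0 (R : idomainType) n (A : 'M[R]_n) (v : 'cV_n) :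
  v != 0 -> A *m v = v -> \det (A - 1%:M) = 0.
Proof.
move=> nz_v Av; rewrite -det_tr; apply/eqP/det0P.
exists v^T; first by rewrite trmx_eq0.
by rewrite -trmx_mul mulmxBl Av mul1mx subrr trmx0.
Qed.

Lemma mxtrace_mx2_fixed_det1 (R : idomainType) (A : 'M[R]_2) (v : 'cV_2) :
  \det A = 1 -> v != 0 -> A *m v = v -> \tr A = 2%:R.
Proof.
move=> detA1 nz_v Av; have := det_subr1_fixed_eq0 nz_v Av.
rewrite det_mx2_subr1 detA1 => trA; apply/esym/eqP.
by rewrite -subr_eq0 -trA; apply/eqP; ring.
Qed.

Lemma pchar2_K : 2%N \in [pchar K].
Proof. exact: (rmorph_pchar (@tofrac _) (rmorph_pchar polyC (pchar_Fp (isT : prime 2)))). Qed.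

Theorem mainTheorem6 (a : 'M[K]_2) (xi : 'cV[K]_2) :
  CSCA a -> laurent_vec xi -> xi != 0 -> a *m xi = xi ->
  a *m a = 1%:M /\ \tr a = 0.
Proof.
move=> [_ det_a1] _ nz_xi a_xi.
have tr_a0 : \tr a = 0.
  by rewrite (mxtrace_mx2_fixed_det1 det_a1 nz_xi a_xi) (pcharf0 pchar2_K).
split=> //.
by rewrite Cayley_Hamilton_mx2 tr_a0 det_a1 scale0r sub0r -raddfN /= oppr_pchar2 // pchar2_K.
Qed.
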